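(* Let $\mathcal{G}$ be a groupoid, $\mathbb{K}$ a field, and $(\theta,\sigma)=(\{T_x\},\{\theta_x\},\sigma)$ a groupoid twisted partial action of $\mathcal{G}$ on a $\mathbb{K}$-semigroup $T$, each $T_x$ having identity $1_x$. Then the map $$\Gamma_\theta :\mathcal{G} \to T \rtimes_{\theta, \sigma}\mathcal{G},\qquad x \mapsto 1_x\delta_x,$$ is a partial projective representation with factor set $\sigma$.
   Context: Groupoid: nonempty set with partial associative product, each $x$ with right identity $d(x)=x^{-1}x$, left identity $r(x)=xx^{-1}$ and inverse; $xy$ defined ($\exists xy$) iff $d(x)=r(y)$; $\mathcal{G}_0$ identities, $\mathcal{G}^2,\mathcal{G}^3$ composable pairs/triples. $\mathbb{K}$-semigroup: semigroup with zero and scalar action with $\alpha(\beta s)=(\alpha\beta)s$, $1s=s$, $\alpha(st)=(\alpha s)t=s(\alpha t)$, $0s=0$; $\mathbb{K}$-cancellative if $\alpha s=\beta s$, $s\ne0$ imply $\alpha=\beta$. Groupoid twisted partial action on a $\mathbb{K}$-semigroup $T$: ideals $T_x$ of $T$, each a monoid, semigroup isomorphisms $\theta_x:T_{x^{-1}}\to T_x$ which are $\mathbb{K}$-maps, and $\sigma:\mathcal{G}\times\mathcal{G}\to\mathbb{K}$ such that for $(x,y)\in\mathcal{G}^2$, $(x,y,z)\in\mathcal{G}^3$: $T_x\subseteq T_{r(x)}$, $\theta_e=\mathrm{Id}$ ($e\in\mathcal{G}_0$); $\theta_x(T_{x^{-1}}\cap T_y)=T_x\cap T_{xy}$; $\theta_x\theta_y=\theta_{xy}$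 on $T_{y^{-1}}\cap T_{(xy)^{-1}}$; $\sigma(x,y)=0\iff T_x\cap T_{xy}=0$; $\sigma(x,d(x))=\sigma(r(x),x)=1$; $T_x\cap T_{xy}\cap T_{xyz}\ne0\Rightarrow\sigma(x,y)\sigma(xy,z)=\sigma(y,z)\sigma(x,yz)$. The identity $1_x$ of $T_x$ is a central idempotent with $T_x=T1_x$. Crossed product $T\rtimes_{\theta,\sigma}\mathcal{G}$: quotient of $L=\{a\delta_x:a\in T_x\}\cup\{0\}$, with $(a\delta_x)(b\delta_y)=\theta_x(\theta_x^{-1}(a)b)\sigma(x,y)\delta_{xy}$ if $\exists xy$, $0$ otherwise, by the ideal $\{0\delta_x\}\cup\{0\}$. Partial projective representation of $\mathcal{G}$ on a $\mathbb{K}$-semigroup $Q$: a map $\Gamma:\mathcal{G}\to Q$ such that, with $\xi:Q\to Q/\lambda$ the quotient by $s\lambda t\iff s=\alpha t$, $\alpha\in\mathbb{K}^*$, whenever $\exists xy$: $\xi\Gamma(x^{-1})\xi\Gamma(x)\xi\Gamma(y)=\xi\Gamma(x^{-1})\xi\Gamma(xy)$ and $\xi\Gamma(x)\xi\Gamma(y)\xi\Gamma(y^{-1})=\xi\Gamma(xy)\xi\Gamma(y^{-1})$. Its factor set is the partial map $\sigma$ into $\mathbb{K}^*$ with domain $\{(x,y)\in\mathcal{G}^2:\Gamma(x)\Gamma(y)\ne0\}$ satisfying $\Gamma(x^{-1})\Gamma(x)\Gamma(y)=\Gamma(x^{-1})\Gamma(xy)\sigma(x,y)$ and $\Gamma(x)\Gamma(y)\Gamma(y^{-1})=\Gamma(xy)\Gamma(y^{-1})\sigma(x,y)$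 there. *)

From HB Require Import structures.
From mathcomp Require Import all_boot all_algebra.
From Stdlib Require Import ClassicalEpsilon.

Set Implicit Arguments.
Unset Strict Implicit.
Unset Printing Implicit Defensive.

Import GRing.Theory.
Local Open Scope ring_scope.

(* Groupoids: a nonempty type with a total function [gmul] whose value  *)
(* is only meaningful on composable pairs, i.e. when [gd x = gr y].     *)
Record groupoid := Groupoid {
  gcar :> Type;
  gmul : gcar -> gcar -> gcar;
  ginv : gcar -> gcar;
  gd : gcar -> gcar;
  gr : gcar -> gcar;
  g_witness : gcar;
  gd_inv : forall x, gd (ginv x) = gr x;
  gr_inv : forall x, gr (ginv x) = gd x;
  gmul_invl : forall x, gmul (ginv x) x = gd x;
  gmul_invr : forall x, gmul x (ginv x) = gr x;
  gr_d : forall x, gr (gd x) = gd x;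
  gd_r : forall x, gd (gr x) = gr x;
  gmul_d : forall x, gmul x (gd x) = x;
  gmul_r : forall x, gmul (gr x) x = x;
  gd_mul : forall x y, gd x = gr y -> gd (gmul x y) = gd y;
  gr_mul : forall x y, gd x = gr y -> gr (gmul x y) = gr x;
  gmulA : forall x y z, gd x = gr y -> gd y = gr z ->
    gmul (gmul x y) z = gmul x (gmul y z)
}.
Arguments gmul {G} : rename.
Arguments ginv {G} : rename.
Arguments gd {G} : rename.
Arguments gr {G} : rename.

Definition is_identity (G : groupoid) (e : G) : Prop := exists x : G, e = gd x.

Record ksemigroup (K : fieldType) := KSemigroup {
  scar :> Type;
  smul : scar -> scar -> scar;
  szero : scar;
  sscale : K -> scar -> scar;
  smulA : forall s t u, smul (smul s t) u = smul s (smul t u);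
  smul0l : forall s, smul szero s = szero;
  smul0r : forall s, smul s szero = szero;
  sscaleA : forall (a b : K) s, sscale a (sscale b s) = sscale (a * b) s;
  sscale1 : forall s, sscale 1 s = s;
  sscale_mull : forall a s t, sscale a (smul s t) = smul (sscale a s) t;
  sscale_mulr : forall a s t, sscale a (smul s t) = smul s (sscale a t);
  sscale0 : forall s, sscale 0 s = szero
}.
Arguments smul {K T} : rename.
Arguments szero {K T} : rename.
Arguments sscale {K T} : rename.

(*   tdom x  = the ideal T_x,  tone x = its identity 1_x,              *)
(*   tth x   = theta_x : T_{x^{-1}} -> T_x,  ttinv x = theta_x^{-1},   *)
(*   tsig    = sigma.                                                  *)
Record twisted_partial_action (G : groupoid) (K : fieldType)
    (T : ksemigroup K) := TPA {
  tdom : G -> T -> Prop;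
  tone : G -> T;
  tth : G -> T -> T;
  ttinv : G -> T -> T;
  tsig : G -> G -> K;
  tdom_zero : forall x, tdom x szero;
  tdom_mull : forall x s a, tdom x a -> tdom x (smul s a);
  tdom_mulr : forall x s a, tdom x a -> tdom x (smul a s);
  tone_in : forall x, tdom x (tone x);
  tone_l : forall x a, tdom x a -> smul (tone x) a = a;
  tone_r : forall x a, tdom x a -> smul a (tone x) = a;
  tth_in : forall x a, tdom (ginv x) a -> tdom x (tth x a);
  ttinv_in : forall x a, tdom x a -> tdom (ginv x) (ttinv x a);
  tth_ttinv : forall x a, tdom x a -> tth x (ttinv x a) = a;
  ttinv_tth : forall x a, tdom (ginv x) a -> ttinv x (tth x a) = a;
  tth_mul : forall x a b, tdom (ginv x) a -> tdom (ginv x) b ->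
    tth x (smul a b) = smul (tth x a) (tth x b);
  tth_scale : forall x (al : K) a, tdom (ginv x) a ->
    tth x (sscale al a) = sscale al (tth x a);
  tdom_r : forall x a, tdom x a -> tdom (gr x) a;
  tth_id : forall e a, is_identity e -> tdom (ginv e) a -> tth e a = a;
  tth_image : forall x y, gd x = gr y ->
    (forall a, tdom (ginv x) a -> tdom y a ->
       tdom x (tth x a) /\ tdom (gmul x y) (tth x a)) /\
    (forall b, tdom x b -> tdom (gmul x y) b ->
       exists a, [/\ tdom (ginv x) a, tdom y a & tth x a = b]);
  tth_comp : forall x y, gd x = gr y -> forall a,
    tdom (ginv y) a -> tdom (ginv (gmul x y)) a ->
    tth x (tth y a) = tth (gmul x y) a;
  tsig_zero : forall x y, gd x = gr y ->
    (tsig x y = 0 <-> (forall a, tdom x a -> tdom (gmul x y) a -> a = szero));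
  tsig_d : forall x, tsig x (gd x) = 1;
  tsig_r : forall x, tsig (gr x) x = 1;
  tsig_cocycle : forall x y z, gd x = gr y -> gd y = gr z ->
    (exists a, [/\ tdom x a, tdom (gmul x y) a,
                   tdom (gmul (gmul x y) z) a & a <> szero]) ->
    tsig x y * tsig (gmul x y) z = tsig y z * tsig x (gmul y z)
}.

(* The crossed product T x|_{theta,sigma} G, realised as the Rees      *)
(* quotient of L by {0 delta_x} \cup {0}: its elements are the zero    *)
(* and the a delta_x with a in T_x, a <> 0.                            *)
Section CrossedProduct.
Variables (G : groupoid) (K : fieldType) (T : ksemigroup K)
          (P : twisted_partial_action G T).

Definition cp_valid (p : option (T * G)) : Prop :=
  match p with
  | None => True
  | Some (a, x) => tdom P x a /\ a <> szero
  end.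

Definition crossed_product := {p : option (T * G) | cp_valid p}.

Definition cp_zero : crossed_product := exist cp_valid None I.

(* the class of a delta_x in the quotient (zero if a = 0) *)
Definition cp_delta (a : T) (x : G) : crossed_product :=
  match excluded_middle_informative (tdom P x a /\ a <> szero) with
  | left H => exist cp_valid (Some (a, x)) H
  | right _ => cp_zero
  end.

Definition cp_mul (p q : crossed_product) : crossed_product :=
  match proj1_sig p, proj1_sig q with
  | Some (a, x), Some (b, y) =>
      match excluded_middle_informative (gd x = gr y) with
      | left _ =>
          cp_delta (sscale (tsig P x y) (tth P x (smul (ttinv P x a) b)))
                   (gmul x y)
      | right _ => cp_zero
      end
  | _, _ => cp_zero
  end.

Definition cp_scale (al : K) (p : crossed_product) : crossed_product :=
  match proj1_sig p with
  | Some (a, x) => cp_delta (sscale al a) x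
  | None => cp_zero
  end.

Definition Gamma_theta (x : G) : crossed_product := cp_delta (tone P x) x.

End CrossedProduct.

(* product [qmul] and scalar action [qscale].  Equality in Q/lambda of  *)
(* xi(s) and xi(t) is  s lambda t,  and xi(s)xi(t)xi(u) = xi(stu).      *)
Definition lambda_rel (K : fieldType) (Q : Type) (qscale : K -> Q -> Q)
  (s t : Q) : Prop := exists al : K, al != 0 /\ s = qscale al t.

Definition partial_projective_rep (G : groupoid) (K : fieldType) (Q : Type)
  (qmul : Q -> Q -> Q) (qscale : K -> Q -> Q) (Gam : G -> Q) : Prop :=
  forall x y : G, gd x = gr y ->
    lambda_rel qscale (qmul (qmul (Gam (ginv x)) (Gam x)) (Gam y))
                      (qmul (Gam (ginv x)) (Gam (gmul x y))) /\
    lambda_rel qscale (qmul (qmul (Gam x) (Gam y)) (Gam (ginv y)))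
                      (qmul (Gam (gmul x y)) (Gam (ginv y))).

Definition is_factor_set (G : groupoid) (K : fieldType) (Q : Type)
  (qmul : Q -> Q -> Q) (qscale : K -> Q -> Q) (qzero : Q) (Gam : G -> Q)
  (sig : G -> G -> K) : Prop :=
  forall x y : G, gd x = gr y -> qmul (Gam x) (Gam y) <> qzero ->
    [/\ sig x y != 0,
        qmul (qmul (Gam (ginv x)) (Gam x)) (Gam y)
          = qscale (sig x y) (qmul (Gam (ginv x)) (Gam (gmul x y)))
      & qmul (qmul (Gam x) (Gam y)) (Gam (ginv y))
          = qscale (sig x y) (qmul (Gam (gmul x y)) (Gam (ginv y)))].

Arguments cp_zero {G K T} P.
Arguments cp_delta {G K T} P a x.
Arguments cp_mul {G K T} P p q.
Arguments cp_scale {G K T} P al p.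
Arguments Gamma_theta {G K T} P x.

(* Gamma(x) Gamma(y) = sigma(x,y) (1_x 1_{xy}) delta_{xy}: the semigroup
   isomorphism theta_x maps T_{x^-1} /\ T_y onto T_x /\ T_{xy}, hence maps the
   identity 1_{x^-1} 1_y of the first ideal to the identity 1_x 1_{xy} of the
   second.  Expanding the two defining identities with this formula, with
   c = 1_{x^-1} 1_y and c' = 1_x 1_{xy}, they compare
     sigma(x^-1,x) c delta_y          with  sigma(x^-1,xy) c delta_y,
     sigma(xy,y^-1) sigma(x,y) c' delta_x  with  sigma(xy,y^-1) c' delta_x.
   A scalar sigma(u,v) vanishes only if T_u /\ T_{uv} = 0, which kills c (resp.
   c'), so both pairs are lambda-related.  For the factor set, the second pair
   differs exactly by sigma(x,y), and the cocycle identity for (x^-1, x, y),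
   applicable since c lies in T_{x^-1} /\ T_{d(x)} /\ T_y, gives
   sigma(x^-1,x) = sigma(x,y) sigma(x^-1,xy) whenever c <> 0. *)
From mathcomp Require Import all_boot all_algebra.
From Stdlib Require Import ClassicalEpsilon.

Set Implicit Arguments.
Unset Strict Implicit.
Unset Printing Implicit Defensive.
Import GRing.Theory.
Local Open Scope ring_scope.

Section GroupoidTheory.
Variable G : groupoid.
Implicit Types x y e : G.

Lemma gd_idem x : gd (gd x) = gd x.
Proof. by have := gd_r (gd x); rewrite gr_d. Qed.

Lemma ginv_gd x : ginv (gd x) = gd x.
Proof.
by rewrite -[LHS](gmul_d (ginv (gd x))) gd_inv gr_d gmul_invl gd_idem.
Qed.

Lemma ginv_identity e : is_identity e -> ginv e = e.
Proof. by case=> x ->; exact: ginv_gd. Qed.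

Lemma gr_identity x : is_identity (gr x).
Proof. by exists (ginv x); rewrite gd_inv. Qed.

Lemma gmulKg x y : gd x = gr y -> gmul (ginv x) (gmul x y) = y.
Proof. by move=> xy; rewrite -gmulA ?gd_inv // gmul_invl xy gmul_r. Qed.

Lemma gmulgK x y : gd x = gr y -> gmul (gmul x y) (ginv y) = x.
Proof. by move=> xy; rewrite gmulA ?gr_inv // gmul_invr -xy gmul_d. Qed.

Lemma gd_mul_inv x y : gd x = gr y -> gd (gmul x y) = gr (ginv y).
Proof. by move=> xy; rewrite gd_mul // gr_inv. Qed.

Lemma gd_inv_mul x y : gd x = gr y -> gd (ginv x) = gr (gmul x y).
Proof. by move=> xy; rewrite gd_inv gr_mul. Qed.

End GroupoidTheory.

Lemma sscaler0 (K : fieldType) (T : ksemigroup K) (k : K) :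
  sscale k (szero : T) = szero.
Proof. by rewrite -{1}(smul0l szero) sscale_mulr smul0l. Qed.

Section TwistedPartialActionTheory.
Variables (G : groupoid) (K : fieldType) (T : ksemigroup K)
  (P : twisted_partial_action G T).

Local Notation D := (tdom P).
Local Notation one := (tone P).
Local Notation th := (tth P).
Local Notation thinv := (ttinv P).

Lemma tone_central x s : smul (one x) s = smul s (one x).
Proof.
have mid_l : smul (one x) (smul s (one x)) = smul s (one x).
  by apply/tone_l/tdom_mull/tone_in.
have mid_r : smul (smul (one x) s) (one x) = smul (one x) s.
  by apply/tone_r/tdom_mulr/tone_in.
by rewrite -mid_r smulA mid_l.
Qed.

Lemma tdom_scale x k a : D x a -> D x (sscale k a).
Proof. by move=> Da; rewrite -(tone_l Da) sscale_mulr; apply/tdom_mulr/tone_in. Qed.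

Lemma tdom_tone_mull x z : D x (smul (one x) (one z)).
Proof. exact/tdom_mulr/tone_in. Qed.

Lemma tdom_tone_mulr x z : D z (smul (one x) (one z)).
Proof. exact/tdom_mull/tone_in. Qed.

Lemma tth_szero x : th x szero = szero.
Proof.
have D0 := tdom_zero P x.
have Dinv : D (ginv x) (thinv x szero) by exact: ttinv_in.
rewrite -{1}(smul0l (thinv x szero)) tth_mul ?tth_ttinv ?smul0r //.
exact: tdom_zero.
Qed.

Lemma ttinv_szero x : thinv x szero = szero.
Proof. by rewrite -{1}(tth_szero x) ttinv_tth //; exact: tdom_zero. Qed.

Lemma tth_identity e a : is_identity e -> D e a -> th e a = a.
Proof. by move=> ide Da; apply: tth_id; rewrite ?ginv_identity. Qed.

Lemma ttinv_identity e a : is_identity e -> D e a -> thinv e a = a.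
Proof.
move=> ide Da; have Dinv := ttinv_in Da; rewrite ginv_identity // in Dinv.
by rewrite -{2}(tth_ttinv Da) tth_identity.
Qed.

Lemma tone_meet x z f : D x f -> D z f ->
  (forall b, D x b -> D z b -> smul f b = b) -> f = smul (one x) (one z).
Proof.
move=> Dxf Dzf f_id.
by rewrite -(f_id _ (tdom_tone_mull x z) (tdom_tone_mulr x z)) -smulA
  (tone_r Dxf) (tone_r Dzf).
Qed.

Lemma ttinv_meet x y a : gd x = gr y -> D x a -> D (gmul x y) a ->
  D (ginv x) (thinv x a) /\ D y (thinv x a).
Proof.
move=> xy Dxa Dxya; have [a' [Da'1 Da'2 <-]] := (tth_image P xy).2 _ Dxa Dxya.
by rewrite ttinv_tth.
Qed.

Lemma tth_ttinv_tone_mul x y : gd x = gr y ->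
  th x (smul (thinv x (one x)) (one y)) = smul (one x) (one (gmul x y)).
Proof.
move=> xy; set u := thinv x (one x).
have Du : D (ginv x) u by apply/ttinv_in/tone_in.
have [Df1 Df2] := (tth_image P xy).1 _ (tdom_mulr (one y) Du) (tdom_mull u (tone_in P y)).
apply: tone_meet => // b Dxb Dxyb; have [Db1 Db2] := ttinv_meet xy Dxb Dxyb.
rewrite -{1}(tth_ttinv Dxb) -tth_mul ?smulA ?(tone_l Db2) //; last exact: tdom_mulr.
by rewrite tth_mul // /u !tth_ttinv ?(tone_l Dxb) //; exact: tone_in.
Qed.

End TwistedPartialActionTheory.

Section CrossedProductTheory.
Variables (G : groupoid) (K : fieldType) (T : ksemigroup K)
  (P : twisted_partial_action G T).

Local Notation D := (tdom P).
Local Notation one := (tone P).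
Local Notation th := (tth P).
Local Notation thinv := (ttinv P).
Local Notation sig := (tsig P).
Local Notation delta := (cp_delta P).
Local Notation Gamma := (Gamma_theta P).
Local Notation "p * q" := (cp_mul P p q).

Local Hint Resolve gr_identity tone_in tdom_tone_mull tdom_tone_mulr : core.

Lemma cp_delta_val a x : D x a -> a <> szero -> proj1_sig (delta a x) = Some (a, x).
Proof.
by move=> Da a0; rewrite /cp_delta; case: excluded_middle_informative => // [[]].
Qed.

Lemma cp_delta0 x : delta szero x = cp_zero P.
Proof. by rewrite /cp_delta; case: excluded_middle_informative => [[_ []]|]. Qed.

Lemma cp_mul_delta a x b y : D x a -> D y b -> gd x = gr y ->
  delta a x * delta b y = delta (sscale (sig x y) (th x (smul (thinv x a) b))) (gmul x y).
Proof.
move=> Da Db xy.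
have [->|a0] := classic (a = szero).
  by rewrite cp_delta0 ttinv_szero smul0l tth_szero sscaler0 cp_delta0.
have [->|b0] := classic (b = szero).
  rewrite cp_delta0 smul0r tth_szero sscaler0 cp_delta0 /cp_mul /=.
  by case: (proj1_sig _) => [[]|].
by rewrite /cp_mul (cp_delta_val Da a0) (cp_delta_val Db b0); case: excluded_middle_informative.
Qed.

Lemma cp_scale_delta k a x : D x a -> cp_scale P k (delta a x) = delta (sscale k a) x.
Proof.
move=> Da; have [->|a0] := classic (a = szero); first by rewrite cp_delta0 sscaler0 cp_delta0.
by rewrite /cp_scale (cp_delta_val Da a0).
Qed.

Lemma lambda_rel_delta_scale w c s t : D w c ->
  (s = 0 -> c = szero) -> (t = 0 -> c = szero) ->
  lambda_rel (cp_scale P) (delta (sscale s c) w) (delta (sscale t c) w).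
Proof.
move=> Dc s0c t0c; have [->|c0] := classic (c = szero).
  by exists 1; rewrite oner_neq0 !sscaler0 cp_delta0.
have s0 : s != 0 by apply: contra_notN c0 => /eqP.
have t0 : t != 0 by apply: contra_notN c0 => /eqP.
exists (s / t); rewrite mulf_neq0 ?invr_neq0 // cp_scale_delta; last exact: tdom_scale.
by rewrite sscaleA mulfVK.
Qed.

Lemma Gamma_mul x y : gd x = gr y ->
  Gamma x * Gamma y = delta (sscale (sig x y) (smul (one x) (one (gmul x y)))) (gmul x y).
Proof. by move=> xy; rewrite /Gamma_theta cp_mul_delta ?tth_ttinv_tone_mul. Qed.

Lemma cp_mul_meet_Gamma w v a : gd w = gr v -> D w a -> D (gmul w v) a ->
  delta a w * Gamma v = delta (sscale (sig w v) a) (gmul w v).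
Proof.
move=> wv Dwa Dwva; have [Da1 Da2] := ttinv_meet wv Dwa Dwva.
by rewrite /Gamma_theta cp_mul_delta // tone_r // tth_ttinv.
Qed.

Lemma cp_mul_identity_Gamma v a : D (gr v) a ->
  delta a (gr v) * Gamma v = delta (smul a (one v)) v.
Proof.
move=> Da; have Dav : D (gr v) (smul a (one v)) by exact: tdom_mulr.
rewrite /Gamma_theta cp_mul_delta ?gd_r ?gmul_r ?tsig_r ?sscale1 //.
by rewrite ttinv_identity ?tth_identity.
Qed.

Lemma Gamma_inv_mul_mul x y : gd x = gr y ->
  (Gamma (ginv x) * Gamma x) * Gamma y =
  delta (sscale (sig (ginv x) x) (smul (one (ginv x)) (one y))) y.
Proof.
move=> xy; have Dinv : D (gd x) (one (ginv x)) by rewrite -gr_inv; apply/tdom_r/tone_in.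
rewrite Gamma_mul ?gd_inv // gmul_invl (tone_r Dinv) xy.
by rewrite cp_mul_identity_Gamma ?sscale_mull //; apply: tdom_scale; rewrite -xy.
Qed.

Lemma Gamma_inv_mul x y : gd x = gr y ->
  Gamma (ginv x) * Gamma (gmul x y) =
  delta (sscale (sig (ginv x) (gmul x y)) (smul (one (ginv x)) (one y))) y.
Proof. by move=> xy; rewrite Gamma_mul ?gmulKg //; apply: gd_inv_mul. Qed.

Lemma Gamma_mul_mul_inv x y : gd x = gr y ->
  (Gamma x * Gamma y) * Gamma (ginv y) =
  delta (sscale (sig (gmul x y) (ginv y) * sig x y) (smul (one x) (one (gmul x y)))) x.
Proof.
move=> xy; rewrite Gamma_mul // cp_mul_meet_Gamma ?gd_mul_inv ?gmulgK ?sscaleA //.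
  by apply/tdom_scale/tdom_tone_mulr.
by apply/tdom_scale/tdom_tone_mull.
Qed.

Lemma Gamma_mul_inv x y : gd x = gr y ->
  Gamma (gmul x y) * Gamma (ginv y) =
  delta (sscale (sig (gmul x y) (ginv y)) (smul (one x) (one (gmul x y)))) x.
Proof. by move=> xy; rewrite Gamma_mul ?gd_mul_inv // gmulgK // tone_central. Qed.

Lemma Gamma_partial_projective : partial_projective_rep (cp_mul P) (cp_scale P) Gamma.
Proof.
move=> x y xy; have sig0 := fun u v uv => (tsig_zero P (x:=u) (y:=v) uv).1.
split.
  rewrite Gamma_inv_mul_mul // Gamma_inv_mul //.
  apply: lambda_rel_delta_scale; first exact: tdom_tone_mulr.
    move/(sig0 _ _ (gd_inv x)); apply; first exact: tdom_tone_mull.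
    by rewrite gmul_invl -gr_inv; apply/tdom_r/tdom_tone_mull.
  by move/(sig0 _ _ (gd_inv_mul xy)); apply; rewrite ?gmulKg.
rewrite Gamma_mul_mul_inv // Gamma_mul_inv //.
have c_xy0 : sig (gmul x y) (ginv y) = 0 -> smul (one x) (one (gmul x y)) = szero.
  by move/(sig0 _ _ (gd_mul_inv xy)); apply; rewrite ?gmulgK.
apply: lambda_rel_delta_scale; [exact: tdom_tone_mull | | exact: c_xy0].
move/eqP; rewrite mulf_eq0 => /orP[/eqP/c_xy0 //|/eqP].
by move/(sig0 _ _ xy); apply.
Qed.

Lemma Gamma_factor_set :
  is_factor_set (cp_mul P) (cp_scale P) (cp_zero P) Gamma sig.
Proof.
move=> x y xy GxGy0.
have sig_xy0 : sig x y != 0.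
  by apply/eqP=> s0; apply: GxGy0; rewrite Gamma_mul // s0 sscale0 cp_delta0.
split=> //; last first.
  rewrite Gamma_mul_mul_inv // Gamma_mul_inv // cp_scale_delta.
    by rewrite sscaleA mulrC.
  exact: tdom_scale.
rewrite Gamma_inv_mul_mul // Gamma_inv_mul // cp_scale_delta; last exact: tdom_scale.
rewrite sscaleA.
set c := smul (one (ginv x)) (one y).
have [->|c0] := classic (c = szero); first by rewrite !sscaler0.
have := @tsig_cocycle _ _ _ P _ _ _ (gd_inv x) xy.
rewrite gmul_invl xy tsig_r mulr1 => -> //.
exists c; split; rewrite ?gmul_r // /c; [exact: tdom_tone_mull | | exact: tdom_tone_mulr].
by rewrite -xy -gr_inv; apply/tdom_r/tdom_tone_mull.
Qed.

End CrossedProductTheory.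

Theorem mainTheorem15 (G : groupoid) (K : fieldType) (T : ksemigroup K)
  (P : twisted_partial_action G T) :
  partial_projective_rep (cp_mul P) (cp_scale P) (Gamma_theta P) /\
  is_factor_set (cp_mul P) (cp_scale P) (cp_zero P) (Gamma_theta P) (tsig P).
Proof. split; [exact: Gamma_partial_projective | exact: Gamma_factor_set]. Qed.
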